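(* Let $X$ be a locally compact Hausdorff space. In the category $\mathrm{SUM}(X)$, the one-point compactification $X+_{f_\infty}\{\infty\}$, where $f_\infty(F)=\emptyset$ if $F$ is compact and $f_\infty(F)=\{\infty\}$ otherwise, is a terminal object.
   Context: $\mathrm{Closed}(A)$ is the set of closed subsets of $A$; an admissible map $f:\mathrm{Closed}(X)\to\mathrm{Closed}(Y)$ satisfies $f(\emptyset)=\emptyset$ and preserves finite unions; $X+_fY$ is $X\sqcup Y$ with closed sets the $D$ such that $D\cap X$ is closed in $X$, $D\cap Y$ closed in $Y$ and $f(D\cap X)\subseteq D$. $\mathrm{SUM}(X)$ is the category whose objects are Hausdorff spaces of the form $X+_fY$ and whose morphisms are continuous maps of the form $\mathrm{id}+\phi:X+_{f_1}Y_1\to X+_{f_2}Y_2$ (identity on $X$, $\phi:Y_1\to Y_2$ on the remainders). *)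

From mathcomp Require Import all_boot all_classical all_reals all_analysis.
Set Implicit Arguments. Unset Strict Implicit. Unset Printing Implicit Defensive.
Local Open Scope classical_set_scope.

(* The remainder Y is described by its family of closed sets [clY].
   For a topologicalType Y we use [closed]; for the one-point space {oo}
   (the type unit) every subset is closed. *)

(* admissible map Closed(X) -> Closed(Y): only values on closed sets matter *)
Definition admissible (X : topologicalType) (Y : Type) (clY : set Y -> Prop)
  (f : set X -> set Y) : Prop :=
  [/\ (forall A, closed A -> clY (f A)),
      f set0 = set0 &
      forall A B, closed A -> closed B -> f (A `|` B) = f A `|` f B].

Definition sum_closed (X : topologicalType) (Y : Type) (clY : set Y -> Prop)
  (f : set X -> set Y) (D : set (X + Y)) : Prop :=
  [/\ closed (inl @^-1` D), clY (inr @^-1` D) & f (inl @^-1` D) `<=` inr @^-1` D].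

Definition sum_open (X : topologicalType) (Y : Type) (clY : set Y -> Prop)
  (f : set X -> set Y) (U : set (X + Y)) : Prop := sum_closed clY f (~` U).

Definition sum_hausdorff (X : topologicalType) (Y : Type) (clY : set Y -> Prop)
  (f : set X -> set Y) : Prop :=
  forall p q : X + Y, p <> q -> exists U V : set (X + Y),
    [/\ sum_open clY f U, sum_open clY f V, U p, V q & U `&` V = set0].

Definition SUM_object (X : topologicalType) (Y : Type) (clY : set Y -> Prop)
  (f : set X -> set Y) : Prop := admissible clY f /\ sum_hausdorff clY f.

Definition id_plus (X Y1 Y2 : Type) (phi : Y1 -> Y2) (p : X + Y1) : X + Y2 :=
  match p with inl x => inl x | inr y => inr (phi y) end.

Definition SUM_morphism (X : topologicalType) (Y1 Y2 : Type)
  (cl1 : set Y1 -> Prop) (f1 : set X -> set Y1)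
  (cl2 : set Y2 -> Prop) (f2 : set X -> set Y2) (phi : Y1 -> Y2) : Prop :=
  forall D, sum_closed cl2 f2 D -> sum_closed cl1 f1 (id_plus phi @^-1` D).

Definition cl_pt : set unit -> Prop := fun _ => True.
Definition f_infty (X : topologicalType) (F : set X) : set unit :=
  if `[< compact F >] then set0 else setT.

From mathcomp Require Import all_boot all_classical all_reals all_analysis.
Local Open Scope classical_set_scope.

(* Any remainder Y of a Hausdorff sum X +_f Y sends compact sets to the
   empty set: if y were in f K, every neighbourhood of y would meet K
   (otherwise its complement would contain f K), so the traces of these
   neighbourhoods on K would converge to a point of K which cannot be
   separated from y.  Hence f <= f_infty, which is exactly continuity of the
   unique map Y -> {oo}.  That the one-point compactification is itself an
   object of SUM(X) is where local compactness is used. *)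

Section SumOpen.
Variables (X Y : topologicalType) (f : set X -> set Y).
Hypothesis adf : admissible closed f.

Lemma admissible_subset {A B : set X} :
  closed A -> closed B -> A `<=` B -> f A `<=` f B.
Proof.
case: adf => _ _ fU cA cB AB.
by rewrite -(setUidr AB) fU //; exact: subsetUl.
Qed.

Lemma sum_openT : sum_open closed f setT.
Proof.
rewrite /sum_open setCT; split; rewrite ?preimage_set0; try exact: closed0.
by case: adf => _ -> _.
Qed.

Lemma sum_openI U V :
  sum_open closed f U -> sum_open closed f V -> sum_open closed f (U `&` V).
Proof.
move=> [cU cU' fU] [cV cV' fV].
rewrite /sum_open /sum_closed setCI !preimage_setU.
split; try exact: closedU.
by case: adf => _ _ ->// y [/fU|/fV]; [left|right].
Qed.

Lemma open_preimage_inl U : sum_open closed f U -> open (inl @^-1` U).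
Proof. by move=> [cU _ _]; rewrite -[inl @^-1` U]setCK; exact: closed_openC. Qed.

Lemma sum_open_meets_closed {K : set X} {y : Y} {V : set (X + Y)} :
  closed K -> f K y -> sum_open closed f V -> V (inr y) ->
  K `&` inl @^-1` V !=set0.
Proof.
move=> cK fKy [cV _ fV] Vy; apply/set0P/negP => /eqP KV.
have KcV : K `<=` inl @^-1` (~` V).
  by move=> x Kx Vx; have : (K `&` inl @^-1` V) x by []; rewrite KV.
exact: fV _ (admissible_subset cK cV KcV _ fKy) Vy.
Qed.

Lemma admissible_compact_eq0 K : hausdorff_space X ->
  sum_hausdorff closed f -> compact K -> f K = set0.
Proof.
move=> hX hs cpK; have cK := compact_closed hX cpK.
apply/seteqP; split => // y fKy.
pose D := [set V : set (X + Y) | sum_open closed f V /\ V (inr y)].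
pose trace (V : set (X + Y)) : set X := K `&` inl @^-1` V.
have F_filter : ProperFilter (filter_from D trace).
  apply: filter_from_proper => [|V [oV Vy]]; last first.
    exact: sum_open_meets_closed cK fKy oV Vy.
  apply: filter_from_filter; first by exists setT; split => //; exact: sum_openT.
  move=> V1 V2 [oV1 V1y] [oV2 V2y]; exists (V1 `&` V2).
    by split => //; exact: sum_openI.
  by move=> x [Kx [V1x V2x]].
have [x [_ clx]] : K `&` cluster (filter_from D trace) !=set0.
  by apply: cpK; exists setT; [split => //; exact: sum_openT | move=> x []].
have [//|U [V [oU oV Ux Vy UV]]] := hs (inl x) (inr y).
have nU : nbhs x (inl @^-1` U).
  by apply: open_nbhs_nbhs; split => //; exact: open_preimage_inl.
have FV : filter_from D trace (trace V) by exists V.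
have [z [[_ Vz] Uz]] := clx _ _ FV nU.
by have : (U `&` V) (inl z) by []; rewrite UV.
Qed.

End SumOpen.

Section OnePoint.
Variable X : topologicalType.

Lemma f_infty_admissible : admissible cl_pt (@f_infty X).
Proof.
split => //; first by rewrite /f_infty asboolT //; exact: compact0.
move=> A B cA cB; rewrite /f_infty.
have [cpA|ncA] := pselect (compact A); last first.
  rewrite (asboolF ncA) asboolF ?setTU // => cpAB; apply: ncA.
  exact: subclosed_compact cA cpAB (@subsetUl _ A B).
have [cpB|ncB] := pselect (compact B); last first.
  rewrite (asboolF ncB) asboolF ?setUT // => cpAB; apply: ncB.
  exact: subclosed_compact cB cpAB (@subsetUr _ A B).
by rewrite !asboolT ?setU0 //; exact: compactU.
Qed.

Definition one_point_set (A : set X) (b : Prop) : set (X + unit) :=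
  fun p => if p is inl x then A x else b.

Lemma sum_open_one_point_set A (b : Prop) : open A -> (b -> compact (~` A)) ->
  sum_open cl_pt (@f_infty X) (one_point_set A b).
Proof.
move=> oA cpA; split => //; first exact: open_closedC.
move=> [] fAt /=; move: fAt; rewrite /f_infty.
by case: (pselect b) => [/cpA cpcA|nb _ //]; rewrite asboolT.
Qed.

Lemma one_point_set_disjoint A B (a b : Prop) : A `&` B = set0 -> ~ (a /\ b) ->
  one_point_set A a `&` one_point_set B b = set0.
Proof.
move=> AB ab; apply/seteqP; split => // -[x [Ax Bx]|[] [ta tb]].
  by have : (A `&` B) x by []; rewrite AB.
by apply: ab.
Qed.

Lemma one_point_separates_infty (lcX : locally_compact [set: X]) (a : X) :
  exists U V : set (X + unit),
    [/\ sum_open cl_pt (@f_infty X) U, sum_open cl_pt (@f_infty X) V,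
        U (inl a), V (inr tt) & U `&` V = set0].
Proof.
have [K + [cpK cK]] := lcX a I; rewrite withinET nbhsE => -[W [oW Wa] WK].
exists (one_point_set W False), (one_point_set (~` K) True); split => //.
- exact: sum_open_one_point_set.
- by apply: sum_open_one_point_set; [exact: closed_openC | rewrite setCK].
- apply: one_point_set_disjoint => [|[]//].
  by apply/seteqP; split => // x [/WK].
Qed.

Lemma one_point_hausdorff : hausdorff_space X -> locally_compact [set: X] ->
  sum_hausdorff cl_pt (@f_infty X).
Proof.
move=> hX lcX [a|[]] [b|[]] pq.
- move: hX; rewrite open_hausdorff => /(_ a b).
  case=> [|[A B] [/= /set_mem Aa /set_mem Bb] [/= oA oB /eqP AB]].
    by apply/eqP => ab; apply: pq; rewrite ab.
  exists (one_point_set A False), (one_point_set B False).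
  split => //; try exact: sum_open_one_point_set.
  by apply: one_point_set_disjoint => // -[].
- exact: one_point_separates_infty.
- have [U [V [oU oV Ub Vt UV]]] := one_point_separates_infty lcX b.
  by exists V, U; split => //; rewrite setIC.
- by exfalso; apply: pq.
Qed.

End OnePoint.

Lemma SUM_morphism_to_one_point (X Y : topologicalType) (f : set X -> set Y) :
  (forall K, compact K -> f K = set0) ->
  SUM_morphism (@closed Y) f cl_pt (@f_infty X) (fun=> tt).
Proof.
move=> fK D [cD _ fD]; have [Dt|nDt] := pselect (D (inr tt)); first by split.
split => //.
  have -> : inr @^-1` (id_plus (fun=> tt) @^-1` D) = set0 :> set Y.
    by apply/seteqP; split.
  exact: closed0.
suff /fK -> : compact (inl @^-1` D : set X) by [].
by apply: contrapT => ncD; apply/nDt/(fD tt); rewrite /f_infty asboolF.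
Qed.

Theorem mainTheorem15 (X : topologicalType) (hX : hausdorff_space X)
  (lcX : locally_compact [set: X]) :
  SUM_object cl_pt (@f_infty X) /\
  forall (Y : topologicalType) (f : set X -> set Y),
    SUM_object (@closed Y) f ->
    exists! phi : Y -> unit,
      SUM_morphism (@closed Y) f cl_pt (@f_infty X) phi.
Proof.
split; first by split; [exact: f_infty_admissible | exact: one_point_hausdorff].
move=> Y f [adf hsf]; exists (fun=> tt); split.
  by apply: SUM_morphism_to_one_point => K; exact: admissible_compact_eq0.
by move=> phi _; apply: funext => y; case: (phi y).
Qed.
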